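(* As $p\to0$, $U(p)=\dfrac{p}{(\log 2)^2}+\Theta(p^2)$, where $U(p):=\min_{r\in[2,\infty)}\dfrac{1}{r\,|\log(1-(1-p)^{r-1})|}$.
   Context: $\log$ is the natural logarithm; $p\in(0,1)$. *)

From HB Require Import structures.
From mathcomp Require Import all_boot all_order all_algebra.
From mathcomp Require Import all_classical all_reals all_analysis.
Set Implicit Arguments. Unset Strict Implicit. Unset Printing Implicit Defensive.
Import Order.TTheory GRing.Theory Num.Theory.
Local Open Scope classical_set_scope.
Local Open Scope ring_scope.

Definition Ug (R : realType) (p r : R) : R :=
  1 / (r * `| ln (1 - (1 - p) `^ (r - 1)) |).

(* U(p) := min_{r in [2,oo)} Ug p r, rendered as the infimum (equal to the
   minimum whenever the minimum exists). *)
Definition U (R : realType) (p : R) : R :=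
  inf [set Ug p r | r in [set r : R | 2 <= r]].

From HB Require Import structures.
From mathcomp Require Import all_boot all_order all_algebra.
From mathcomp Require Import all_classical all_reals all_analysis.
From mathcomp Require Import ring lra.
Import Order.TTheory GRing.Theory Num.Theory numFieldNormedType.Exports.
Local Open Scope ring_scope.
Set Implicit Arguments. Unset Strict Implicit. Unset Printing Implicit Defensive.

(* Write L = - ln (1 - p).  Since ln x * ln (1 - x) <= (ln 2)^2 on (0, 1),
   comparing (1 - p)^(r - 1) with (1 - p)^r shows that every r >= 2 satisfies
   r * L * |ln (1 - (1 - p)^(r - 1))| <= (ln 2)^2 + 2 p, whence
   U p >= p / ((ln 2)^2 + 2 p) = p / (ln 2)^2 - O(p^2).  Conversely the r with
   (1 - p)^(r - 1) = 1/2, which is >= 2 exactly when p <= 1/2, gives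
   U p <= L / (ln 2 * (L + ln 2)); as L = p + O(p^2) with L >= p, this lies below
   p / (ln 2)^2 by a margin of order p^2. *)

Section DivisionInequalities.
Variable F : realFieldType.
Implicit Types a c p L : F.

Lemma div_sub_div_addr_le a p : 0 < a -> 0 <= p ->
  p / a - p / (a + 2 * p) <= 2 / a ^+ 2 * p ^+ 2.
Proof.
move=> a_gt0 p_ge0.
have -> : p / a - p / (a + 2 * p) = 2 * p ^+ 2 / (a * (a + 2 * p)) by field; lra.
have -> : 2 / a ^+ 2 * p ^+ 2 = 2 * p ^+ 2 / a ^+ 2 by field; lra.
apply: ler_wpM2l; first by have := sqr_ge0 p; lra.
by rewrite lef_pV2 ?posrE ?exprn_gt0 ?mulr_gt0 // ?expr2 ?ler_wpM2l //; lra.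
Qed.

Lemma div_sub_div_mulD_ge c p L : 0 < c < 1 -> 0 < p < 1 -> p <= L ->
  L * (1 - p) <= p -> (1 - c) / 2 * p ^+ 2 <= p / c ^+ 2 - L / (c * (L + c)).
Proof.
move=> /andP[c_gt0 c_lt1] /andP[p_gt0 p_lt1] pL Lp.
have -> : p / c ^+ 2 - L / (c * (L + c)) = (p * L - (L - p) * c) / (c ^+ 2 * (L + c)).
  by field; apply/andP; split; lra.
rewrite ler_pdivlMr; last by apply: mulr_gt0; [apply: exprn_gt0 | lra].
have Lp_c : (L - p) * c <= p * L * c by apply: ler_wpM2r; lra.
have c2_le1 : c ^+ 2 <= 1 by rewrite exprn_ile1 // ltW.
have pc2_le1 : p * c ^+ 2 <= 1 by rewrite mulr_ile1 ?exprn_ge0 // ltW.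
have pc2L_le : p * c ^+ 2 * L <= L by rewrite ler_piMl //; lra.
have pc3_le : p * (c ^+ 2 * c) <= p by rewrite ler_piMr ?mulr_ile1 ?exprn_ge0 //; lra.
have : p * c ^+ 2 * (L + c) <= 2 * L by lra.
have onem_c_p_ge0 : 0 <= (1 - c) / 2 * p by apply: mulr_ge0; lra.
move=> /(ler_wpM2l onem_c_p_ge0); lra.
Qed.
End DivisionInequalities.

Section LnEstimates.
Variable R : realType.
Implicit Types p q r s x y : R.

Lemma ln_le_subr1 x : 0 < x -> ln x <= x - 1.
Proof. by move=> x_gt0; have := @le_ln1Dx R (x - 1); rewrite addrCA subrr addr0; apply; lra. Qed.

(* Concavity of ln: the chord slope - ln s / (1 - s) from s to 1 decreases. *)
Lemma ln_mul_onem_le (s1 s2 : R) : 0 < s1 -> s1 <= s2 -> s2 < 1 ->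
  ln s1 * (1 - s2) <= ln s2 * (1 - s1).
Proof.
move=> s1_gt0 s12 s2_lt1.
have s1_lt1 : 0 < 1 - s1 by lra.
set t := (1 - s2) / (1 - s1).
have t01 : Itv.spec (@Itv.num_sem R) (Itv.Real `[0%Z, 1%Z]) t.
  have t_ge0 : 0 <= t by rewrite divr_ge0 //; lra.
  have t_le1 : t <= 1 by rewrite ler_pdivrMr // mul1r; lra.
  by rewrite /Itv.spec /Itv.num_sem /= num_real in_itv /= t_ge0 t_le1.
have := @concave_ln R (Itv.mk t01) s1 1 s1_gt0 ltr01.
rewrite !convRE /= ln1 mulr0 addr0 mulr1.
have -> : t * s1 + unstable.onem t = s2 by rewrite /unstable.onem /t; field; lra.
move=> /(ler_wpM2r (ltW s1_lt1)).
by rewrite [_ * (1 - s1)]mulrAC /t divfK ?lt0r_neq0 // mulrC.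
Qed.

Lemma ln2_gt0 : 0 < ln (2 : R).
Proof. by apply: ln_gt0; lra. Qed.

Lemma ln2_lt1 : ln (2 : R) < 1.
Proof.
rewrite -[X in _ < X]expRK ltr_ln ?posrE ?expR_gt0 //.
exact: (@expR_gt1Dx R 1 (oner_neq0 _)).
Qed.

Lemma is_derive_ln_mul_ln_onem (x : R) : 0 < x < 1 ->
  is_derive x 1 (fun x => ln x * ln (1 - x)) (ln (1 - x) / x - ln x / (1 - x)).
Proof.
case/andP=> x_gt0 x_lt1.
have dln : is_derive x 1 (@ln R) x^-1 := is_derive1_ln x_gt0.
have donem : is_derive x (1:R) (cst (1:R) - id) (0 - 1) by apply: is_deriveB.
have dlnonem : is_derive x 1 (@ln R \o (cst 1 - id)) ((1 - x)^-1 * (0 - 1)).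
  by apply: is_derive1_comp donem; apply: is_derive1_ln; rewrite /= subr_gt0.
suff -> : ln (1 - x) / x - ln x / (1 - x) =
    ln x *: ((1 - x)^-1 * (0 - 1)) + ln (1 - x) *: x^-1.
  exact: is_deriveM dln dlnonem.
change (ln (1 - x) / x - ln x / (1 - x) = ln x * ((1 - x)^-1 * (0 - 1)) + ln (1 - x) * x^-1).
by field; lra.
Qed.

Lemma ln_mul_ln_onem_le_half (x : R) : 0 < x <= 1/2 ->
  ln x * ln (1 - x) <= ln (1/2) * ln (1 - 1/2).
Proof.
case/andP=> x_gt0 x_le_half.
have x01 z : z \in `]x, 1/2[ -> 0 < z < 1.
  by rewrite in_itv /= => /andP[? ?]; apply/andP; split; lra.
apply: (@ger0_derive1_ndecr R (fun x => ln x * ln (1 - x)) x (1/2)) => //.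
- by move=> z /x01 /is_derive_ln_mul_ln_onem [].
- move=> z /[dup] /x01 z01; rewrite in_itv /= => /andP[_ z_lt_half].
  have z_der := is_derive_ln_mul_ln_onem z01; rewrite derive1E derive_val.
  have := @ln_mul_onem_le z (1 - z) ltac:(lra) ltac:(lra) ltac:(lra).
  rewrite subKr => ln_le.
  have -> : ln (1 - z) / z - ln z / (1 - z) =
      (ln (1 - z) * (1 - z) - ln z * z) / (z * (1 - z)).
    by field; apply/andP; split; lra.
  by rewrite divr_ge0 ?subr_ge0 // mulr_ge0 //; lra.
- apply: continuous_in_subspaceT => z.
  rewrite inE /= in_itv /= => /andP[xz z_le_half].
  have [z_der _] := @is_derive_ln_mul_ln_onem z ltac:(apply/andP; split; lra).
  exact/differentiable_continuous/derivable1_diffP.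
Qed.

Lemma ln_mul_ln_onem_le (x : R) : 0 < x < 1 -> ln x * ln (1 - x) <= ln 2 ^+ 2.
Proof.
have -> : ln 2 ^+ 2 = ln (1/2 : R) * ln (1 - 1/2).
  by rewrite (_ : 1 - 1/2 = 1/2 :> R) ?div1r ?lnV ?posrE ?mulrNN ?expr2 //; field.
case/andP=> x_gt0 x_lt1; have [x_le_half | x_gt_half] := lerP x (1/2).
  by apply: ln_mul_ln_onem_le_half; apply/andP.
rewrite -[X in ln X * _](subKr 1) mulrC.
by apply: ln_mul_ln_onem_le_half; apply/andP; split; lra.
Qed.

Lemma ln_onem_bounds p : 0 < p < 1 -> p <= - ln (1 - p) /\ - ln (1 - p) * (1 - p) <= p.
Proof.
case/andP=> p_gt0 p_lt1; split.
  by have := @le_ln1Dx R (- p); rewrite lerNr; apply; lra.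
have onem_gt0 : 0 < 1 - p by lra.
have := @ln_le_subr1 (1 - p)^-1; rewrite lnV ?posrE // invr_gt0 => /(_ onem_gt0).
have -> : (1 - p)^-1 - 1 = p / (1 - p) by field; lra.
by rewrite ler_pdivlMr.
Qed.

Lemma powR_lt1 q s : 0 < q < 1 -> 0 < s -> q `^ s < 1.
Proof.
case/andP=> q_gt0 q_lt1 s_gt0.
by rewrite /powR gt_eqF // expR_lt1 pmulr_rlt0 // ln_lt0 // q_gt0.
Qed.

Lemma powR_mul_onem_ln_le q s : 0 < q -> q `^ s * (1 - s * ln q) <= 1.
Proof.
move=> q_gt0; rewrite /powR gt_eqF //.
have := expR_ge1Dx (- (s * ln q)).
by rewrite -(ler_pM2l (expR_gt0 (s * ln q))) -expRD subrr expR0.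
Qed.

Lemma ln_onem_mul_sub_le q y : 0 < q <= 1 -> 0 < y < 1 ->
  ln (1 - q * y) - ln (1 - y) <= (1 - q) * y / (1 - y).
Proof.
case/andP=> q_gt0 q_le1 /andP[y_gt0 y_lt1].
have qy_le : q * y <= y by rewrite ler_piMl // ltW.
rewrite -ln_div ?posrE; [|lra|lra].
have -> : (1 - q) * y / (1 - y) = (1 - q * y) / (1 - y) - 1 by field; lra.
by apply: ln_le_subr1; apply: divr_gt0; lra.
Qed.

(* With x = (1 - p)^r one has r * L * - ln (1 - x) = ln x * ln (1 - x); passing
   from x to y = (1 - p)^(r - 1) costs at most 2 p because y <= 1 / (1 + (r - 1) L). *)
Lemma mul_ln_onem_powR_le p r : 0 < p < 1 -> 2 <= r ->
  r * (- ln (1 - p)) * (- ln (1 - (1 - p) `^ (r - 1))) <= ln 2 ^+ 2 + 2 * p.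
Proof.
move=> /[dup] p01 /andP[p_gt0 p_lt1] r_ge2.
have q01 : 0 < 1 - p < 1 by apply/andP; split; lra.
have [pL _] := ln_onem_bounds p01.
set q := 1 - p in q01 *; set L := - ln q in pL *.
set y := q `^ (r - 1).
have y_gt0 : 0 < y by apply: powR_gt0; lra.
have y_lt1 : y < 1 by apply: powR_lt1 => //; lra.
have yL : y * (1 + (r - 1) * L) <= 1.
  by have := @powR_mul_onem_ln_le q (r - 1) ltac:(lra); rewrite /L mulrN.
have rLy : r * L * y <= 2 * (1 - y).
  have : r * (L * y) <= 2 * (r - 1) * (L * y) by apply: ler_wpM2r; nra.
  nra.
set x := q * y.
have x01 : 0 < x < 1 by case/andP: q01 => *; rewrite /x mulr_gt0 //= mulr_ilt1 // ltW.
have ln_x : ln x = r * ln q.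
  by rewrite lnM ?posrE ?ln_powR; [ring | lra | lra].
have near_half : r * L * - ln (1 - x) <= ln 2 ^+ 2.
  by have := ln_mul_ln_onem_le x01; rewrite ln_x /L; lra.
have gap := @ln_onem_mul_sub_le q y ltac:(lra) ltac:(lra).
rewrite /q subKr -/x in gap.
have gapM : (1 - y) * (ln (1 - x) - ln (1 - y)) <= p * y.
  by rewrite mulrC -ler_pdivlMr ?subr_gt0.
have rL_ge0 : 0 <= r * L by apply: mulr_ge0; lra.
have : (1 - y) * (r * L * (ln (1 - x) - ln (1 - y))) <= (1 - y) * (2 * p).
  rewrite mulrCA; apply: le_trans (ler_wpM2l rL_ge0 gapM) _.
  by have := ler_wpM2r (ltW p_gt0) rLy; rewrite mulrA; lra.
rewrite ler_pM2l ?subr_gt0 //; lra.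
Qed.

Lemma Ug_ge p r : 0 < p < 1 -> 2 <= r -> p / (ln 2 ^+ 2 + 2 * p) <= Ug p r.
Proof.
move=> /[dup] p01 /andP[p_gt0 p_lt1] r_ge2.
have [pL _] := ln_onem_bounds p01.
have y_lt1 : (1 - p) `^ (r - 1) < 1 by apply: powR_lt1; [apply/andP; split|]; lra.
have y_gt0 : 0 < (1 - p) `^ (r - 1) by apply: powR_gt0; lra.
have B_gt0 : 0 < - ln (1 - (1 - p) `^ (r - 1)).
  by rewrite oppr_gt0 ln_lt0 //; apply/andP; split; lra.
have := mul_ln_onem_powR_le p01 r_ge2.
rewrite /Ug ltr0_norm -?oppr_gt0 //.
set L := - ln (1 - p) in pL *; set B := - ln (1 - _) in B_gt0 *.
have rB_gt0 : 0 < r * B by apply: mulr_gt0; lra.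
rewrite div1r ler_pdivrMr; last by have := sqr_ge0 (ln (2 : R)); lra.
rewrite [_^-1 * _]mulrC ler_pdivlMr // => rLB_le.
have : 0 <= r * B * (L - p) by apply: mulr_ge0; lra.
nra.
Qed.

(* At this r, (1 - p) `^ (r - 1) = 1/2. *)
Lemma Ug_half_point p : 0 < p < 1 ->
  Ug p (1 + ln 2 / - ln (1 - p)) = - ln (1 - p) / (ln 2 * (- ln (1 - p) + ln 2)).
Proof.
move=> /[dup] p01 /andP[p_gt0 p_lt1].
have [pL _] := ln_onem_bounds p01.
have c_gt0 := ln2_gt0.
rewrite /Ug addrAC subrr add0r /powR gt_eqF ?subr_gt0 //.
have -> : ln 2 / - ln (1 - p) * ln (1 - p) = - ln 2 by field; lra.
rewrite expRN lnK ?posrE // (_ : 1 - 2^-1 = 2^-1 :> R); last by field.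
rewrite lnV ?posrE // normrN gtr0_norm //.
by field; apply/and3P; split; lra.
Qed.

Lemma U_bounds p : 0 < p <= 1/2 ->
  p / (ln 2 ^+ 2 + 2 * p) <= U p <= - ln (1 - p) / (ln 2 * (- ln (1 - p) + ln 2)).
Proof.
case/andP=> p_gt0 p_le_half; have p01 : 0 < p < 1 by apply/andP; split; lra.
have L_le_ln2 : - ln (1 - p) <= ln 2.
  by rewrite lerNl -lnV ?posrE // ler_ln ?posrE //; lra.
set S := [set Ug p r | r in [set r | 2 <= r]]%classic.
have half_in_S : S (Ug p (1 + ln 2 / - ln (1 - p))).
  exists (1 + ln 2 / - ln (1 - p)) => //=.
  have [pL _] := ln_onem_bounds p01.
  by rewrite -lerBlDl ler_pdivlMr; lra.
have S_lb : lbound S (p / (ln 2 ^+ 2 + 2 * p)).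
  by move=> _ [r /= r_ge2 <-]; apply: Ug_ge.
rewrite /U -/S -Ug_half_point //; apply/andP; split.
  by apply: lb_le_inf => //; exists (Ug p (1 + ln 2 / - ln (1 - p))).
by apply: ge_inf => //; exists (p / (ln 2 ^+ 2 + 2 * p)).
Qed.
End LnEstimates.

Theorem claim1 (R : realType) :
  exists c1 c2 delta : R, [/\ 0 < c1, 0 < c2, 0 < delta &
    forall p : R, 0 < p -> p < 1 -> p < delta ->
      c1 * p ^+ 2 <= `| U p - p / (ln (2 : R)) ^+ 2 | <= c2 * p ^+ 2].
Proof.
have c_gt0 := ln2_gt0 R; have c_lt1 := ln2_lt1 R.
have c2_gt0 : 0 < ln (2 : R) ^+ 2 by apply: exprn_gt0.
exists ((1 - ln 2) / 2), (2 / (ln 2 ^+ 2) ^+ 2), (1 / 2); split.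
- by apply: divr_gt0; lra.
- by apply: divr_gt0; rewrite ?exprn_gt0.
- by [].
move=> p p_gt0 p_lt1 p_lt_half.
have p01 : 0 < p < 1 by apply/andP.
have /andP[U_ge U_le] := @U_bounds R p ltac:(apply/andP; split; lra).
have [pL Lp] := ln_onem_bounds p01.
have lower_gap := div_sub_div_addr_le c2_gt0 (ltW p_gt0).
have upper_gap := @div_sub_div_mulD_ge _ (ln 2) p _
  ltac:(apply/andP; split; lra) p01 pL Lp.
have gap_ge0 : 0 <= (1 - ln 2) / 2 * p ^+ 2.
  by apply: mulr_ge0; [apply: divr_ge0 | apply: sqr_ge0]; lra.
by rewrite ler0_norm; [apply/andP; split |]; lra.
Qed.
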